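(* Let $f(x)=\sum_{i=0}^d a_ix^i\in k[x]$ satisfy condition $(\ast)$. Then there exists a dense open subset $U_f\subseteq\mathbb G_{m,k}$ (with coordinate $s$) such that for all $s\in U_f$ the degree of an Artin–Schreier reduced form of $sf(x)$ is constant and equal to $e(f):=\max\{ i_{\hat p} : 1\le i\le d,\ a_i\neq 0\}$.
   Context: Let $p$ be a prime and $k$ a finite field of characteristic $p$. Condition $(\ast)$ on $f=\sum a_ix^i$: there exists an integer $i>0$ which is not a power of $p$ with $a_i\neq 0$. For a positive integer $n$, $n_{\hat p}$ denotes its prime-to-$p$ part. Two polynomials in $k[x]$ (or $\bar k[x]$) are Artin–Schreier equivalent if their difference is of the form $h^p-h$ for some polynomial $h$. A polynomial $g=\sum b_ix^i$ is an Artin–Schreier reduced form of $f$ if it is Artin–Schreier equivalent to $f$ and $b_i=0$ for every $i>0$ divisible by $p$ (it is unique up to adding a constant). *)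

From HB Require Import structures.
From mathcomp Require Import all_boot all_order all_algebra all_field.
Set Implicit Arguments. Unset Strict Implicit. Unset Printing Implicit Defensive.
Import GRing.Theory.
Local Open Scope ring_scope.

Definition AS_equiv (R : comNzRingType) (p : nat) (f g : {poly R}) : Prop :=
  exists h : {poly R}, f - g = h ^+ p - h.

Definition AS_reduced_form (R : comNzRingType) (p : nat) (f g : {poly R}) : Prop :=
  AS_equiv p f g /\ (forall i : nat, (0 < i)%N -> (p %| i)%N -> g`_i = 0).

Definition cond_star (R : nzRingType) (p : nat) (f : {poly R}) : Prop :=
  exists i : nat, [/\ (0 < i)%N, ~ (exists j : nat, i = p ^ j)%N & f`_i != 0].

Definition e_of (R : nzRingType) (p : nat) (f : {poly R}) : nat :=
  \max_(1 <= i < size f | f`_i != 0) (i`_p^')%N.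

From HB Require Import structures.
From mathcomp Require Import all_boot all_order all_algebra all_field.
From mathcomp Require Import ring.
Set Implicit Arguments. Unset Strict Implicit. Unset Printing Implicit Defensive.
Import GRing.Theory.
Local Open Scope ring_scope.

(** For j prime to p consider T_M(F) = \sum_(m <= M) F_(p^m j)^(p^(M-m)). In
    characteristic p it is additive in F and maps h^p - h to -h_(p^M j), which vanishes
    for M large, while on an Artin-Schreier reduced form g it equals g_j^(p^M). So the
    coefficient g_j of a reduced form of s f is determined by the T_M(s f), M large.
    Above e = e(f) every f_(p^m j) vanishes, whence deg g <= e; at j = e, T_M(s f) is a
    p-power of a nonzero polynomial in s, so g_e <> 0 away from its finitely many roots. *)

Lemma leq_expl_mul p m j : (1 < p)%N -> (0 < j)%N -> (m <= p ^ m * j)%N.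
Proof. by move=> p_gt1 j_gt0; rewrite (leq_trans (ltnW (ltn_expl m p_gt1))) ?leq_pmulr. Qed.

Lemma ndvdn_gt0 d n : ~~ (d %| n)%N -> (0 < n)%N.
Proof. by rewrite lt0n; apply: contraNneq => ->. Qed.

Lemma p'part_expnM p m j : prime p -> ~~ (p %| j)%N -> ((p ^ m * j)`_p^' = j)%N.
Proof.
move=> p_pr pNj; have j_gt0 := ndvdn_gt0 pNj.
rewrite partnM ?expn_gt0 ?(prime_gt0 p_pr) // part_p'nat ?pnatNK ?pnatX ?pnat_id //.
by rewrite mul1n part_pnat_id ?p'natE.
Qed.

Lemma closed_nth_root (L : closedFieldType) n (x : L) :
  (0 < n)%N -> exists y, y ^+ n = x.
Proof.
move=> n_gt0; have /closed_rootP[y] : size ('X^n - x%:P) != 1.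
  by rewrite size_XnsubC // eqSS -lt0n.
by rewrite rootE !hornerE subr_eq0 => /eqP; exists y.
Qed.

Lemma coef_neq0_ltn_size (R : nzSemiRingType) (F : {poly R}) i :
  F`_i != 0 -> (i < size F)%N.
Proof. by rewrite ltnNge; apply: contra => /(nth_default 0)/eqP. Qed.

Section EOf.
Variables (R : nzRingType) (p : nat).
Implicit Types F : {poly R}.

Lemma e_of_max F i : (0 < i)%N -> F`_i != 0 -> (i`_p^' <= e_of p F)%N.
Proof.
by move=> i_gt0 Fi; rewrite leq_bigmax_seq // mem_index_iota i_gt0 coef_neq0_ltn_size.
Qed.

Lemma e_of_attained F i : (0 < i)%N -> F`_i != 0 ->
  exists2 j, (0 < j)%N && (F`_j != 0) & e_of p F = (j`_p^')%N.
Proof.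
move=> i_gt0 Fi; have i_lt := coef_neq0_ltn_size Fi; rewrite /e_of big_geq_mkord.
have Pi : (F`_(Ordinal i_lt) != 0) && (1 <= Ordinal i_lt)%N by rewrite Fi.
rewrite (bigmax_eq_arg (Ordinal i_lt) Pi); case: arg_maxnP => // j /andP[Fj j_gt0] _.
by exists j; rewrite ?j_gt0.
Qed.

Lemma eq_e_of (S : nzRingType) F (G : {poly S}) : size F = size G ->
  (forall i, (F`_i != 0) = (G`_i != 0)) -> e_of p F = e_of p G.
Proof. by move=> eq_size eq_supp; rewrite /e_of eq_size; apply: eq_bigl => i. Qed.

Lemma e_of_witness F i : prime p -> (0 < i)%N -> F`_i != 0 ->
  ~~ (p %| e_of p F)%N /\ exists2 m, (m < size F)%N & F`_(p ^ m * e_of p F) != 0.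
Proof.
move=> p_pr i_gt0 Fi; have [j /andP[j_gt0 Fj] ->] := e_of_attained i_gt0 Fi.
split; first by rewrite -p'natE // part_pnat.
exists (logn p j); last by rewrite -p_part partnC.
rewrite (leq_trans (ltn_expl _ (prime_gt1 p_pr))) // -p_part.
exact: leq_trans (dvdn_leq j_gt0 (dvdn_part _ _)) (ltnW (coef_neq0_ltn_size Fj)).
Qed.

End EOf.

Lemma e_of_scale (R : idomainType) p (F : {poly R}) s :
  s != 0 -> e_of p (s *: F) = e_of p F.
Proof.
by move=> s0; apply: eq_e_of => [|i]; rewrite ?size_scale // coefZ mulf_eq0 (negPf s0).
Qed.

Fixpoint AS_trace (R : nzRingType) (p j : nat) (F : {poly R}) (M : nat) : R :=
  if M is M'.+1 then AS_trace p j F M' ^+ p + F`_(p ^ M * j) else F`_j.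

Lemma AS_trace_map (R S : nzRingType) (phi : {rmorphism R -> S}) p j F M :
  AS_trace p j (map_poly phi F) M = phi (AS_trace p j F M).
Proof. by elim: M => [|M IH] /=; rewrite ?IH ?rmorphD ?rmorphXn coef_map. Qed.

Lemma AS_trace_stable (R : nzRingType) p j (F : {poly R}) M0 N :
  (forall m, (M0 < m)%N -> F`_(p ^ m * j) = 0) ->
  AS_trace p j F (M0 + N) = AS_trace p j F M0 ^+ (p ^ N).
Proof.
move=> F_eq0; elim: N => [|N IH]; first by rewrite addn0 expr1.
by rewrite addnS /= IH F_eq0 ?ltnS ?leq_addr // addr0 -exprM expnSr.
Qed.

Lemma AS_trace_scale (R : comNzRingType) p j (F : {poly R}) s M :
  AS_trace p j (s *: F) M = (AS_trace p j ('X *: F^:P) M).[s].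
Proof.
have -> : s *: F = map_poly (horner_eval s) ('X *: F^:P).
  apply/polyP => i; rewrite !(coefZ, coef_map) /= horner_evalE.
  by rewrite [_ * _%:P]mulrC hornerCM hornerX mulrC.
by rewrite AS_trace_map.
Qed.

Section Frobenius.
Variables (R : comNzRingType) (p : nat).
Hypothesis chR : p \in [pchar R].
Implicit Types F G H g h : {poly R}.

Let p_gt0 : (0 < p)%N := prime_gt0 (pcharf_prime chR).
Let chRX : p \in [pchar {poly R}] := etrans (pchar_poly R p) chR.
Let frobB (x y : R) : (x - y) ^+ p = x ^+ p - y ^+ p := rmorphB (pFrobenius_aut chR) x y.
Let frobN (x : R) : (- x) ^+ p = - x ^+ p := rmorphN (pFrobenius_aut chR) x.

Lemma exp_pchar_poly h : h ^+ p = map_poly (pFrobenius_aut chR) h \Po 'X^p.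
Proof.
elim/poly_ind: h => [|h c IH]; first by rewrite rmorph0 comp_poly0 expr0n gtn_eqF.
rewrite -(pFrobenius_autE chRX) rmorphD rmorphM /= !pFrobenius_autE IH.
by rewrite rmorphD rmorphM /= map_polyX map_polyC comp_poly_MXaddC rmorphXn.
Qed.

Lemma coef_exp_pchar h i :
  (h ^+ p)`_i = if (p %| i)%N then h`_(i %/ p) ^+ p else 0.
Proof. by rewrite exp_pchar_poly coef_comp_poly_Xn // coef_map /= pFrobenius_autE. Qed.

Lemma AS_equiv_refl F : AS_equiv p F F.
Proof. by exists 0; rewrite subrr expr0n gtn_eqF ?subr0. Qed.

Lemma AS_equiv_trans F G H : AS_equiv p F G -> AS_equiv p G H -> AS_equiv p F H.
Proof.
move=> [h1 FG] [h2 GH]; exists (h1 + h2).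
have -> : (h1 + h2) ^+ p = h1 ^+ p + h2 ^+ p := rmorphD (pFrobenius_aut chRX) h1 h2.
have -> : F - H = (F - G) + (G - H) by ring.
by rewrite FG GH; ring.
Qed.

Lemma AS_traceB j F G M :
  AS_trace p j (F - G) M = AS_trace p j F M - AS_trace p j G M.
Proof.
by elim: M => [|M IH] /=; rewrite coefB // IH frobB; ring.
Qed.

Lemma AS_trace_AS_image j h M : ~~ (p %| j)%N ->
  AS_trace p j (h ^+ p - h) M = - h`_(p ^ M * j).
Proof.
move=> pNj; elim: M => [|M IH] /=; rewrite coefB coef_exp_pchar.
  by rewrite (negPf pNj) mul1n sub0r.
by rewrite IH expnS -mulnA dvdn_mulr // mulKn // frobN; ring.
Qed.

Lemma AS_trace_reduced j g M : (0 < j)%N ->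
  (forall i, (0 < i)%N -> (p %| i)%N -> g`_i = 0) ->
  AS_trace p j g M = g`_j ^+ (p ^ M).
Proof.
move=> j_gt0 g_red; elim: M => [|M IH] /=; first by rewrite expr1.
have -> : g`_(p ^ M.+1 * j) = 0.
  by apply: g_red; rewrite ?muln_gt0 ?expn_gt0 ?p_gt0 // expnS -mulnA dvdn_mulr.
by rewrite IH addr0 -exprM expnSr.
Qed.

Lemma AS_trace_eq0 j F M : (forall m, F`_(p ^ m * j) = 0) -> AS_trace p j F M = 0.
Proof.
move=> F_eq0; elim: M => [|M IH] /=; last by rewrite IH F_eq0 expr0n gtn_eqF // addr0.
by have := F_eq0 0%N; rewrite mul1n.
Qed.

Lemma coef1_AS_trace_scaleX j F M :
  (AS_trace p j ('X *: F^:P) M)`_1 = F`_(p ^ M * j).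
Proof.
have coef1 i : ('X *: F^:P)`_i`_1 = F`_i.
  by rewrite coefZ coef_map mulrC coefCM coefX mulr1.
case: M => [|M] /=; first by rewrite coef1 mul1n.
rewrite coefD coef_exp_pchar dvdn1 gtn_eqF ?prime_gt1 ?(pcharf_prime chR) //.
by rewrite add0r coef1.
Qed.

End Frobenius.

Section Existence.
Variables (R : comNzRingType) (p : nat).
Hypotheses (chR : p \in [pchar R]) (R_perfect : forall x : R, exists y, y ^+ p = x).
Implicit Types F G : {poly R}.

Let p_gt1 : (1 < p)%N := prime_gt1 (pcharf_prime chR).

Lemma AS_equiv_drop_coef F n : (0 < n)%N -> (p %| n)%N ->
  exists G, [/\ AS_equiv p F G, G`_n = 0 & forall i, (n < i)%N -> G`_i = F`_i].
Proof.
move=> n_gt0 pn; have [c c_p] := R_perfect F`_n.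
have n_gt : (n %/ p < n)%N by rewrite ltn_Pdiv.
set h := c *: 'X^(n %/ p).
have h_p : h ^+ p = F`_n *: 'X^n by rewrite exprZn -exprM divnK // c_p.
exists (F - (h ^+ p - h)); split.
- by exists h; ring.
- by rewrite !coefB h_p !coefZ !coefXn eqxx gtn_eqF // mulr1 mulr0; ring.
- move=> i ni; rewrite !coefB h_p !coefZ !coefXn !gtn_eqF ?(ltn_trans n_gt) //.
  by rewrite !mulr0 !subr0.
Qed.

Lemma exists_AS_reduced_form F : exists g, AS_reduced_form p F g.
Proof.
suff : forall n F, (forall i, (n <= i)%N -> (0 < i)%N -> (p %| i)%N -> F`_i = 0) ->
    exists g, AS_reduced_form p F g.
  by move=> /(_ (size F) F); apply=> i Fi _ _; apply: nth_default.
elim=> [|n IH] {}F F_red.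
  by exists F; split=> [|i]; [apply: AS_equiv_refl | apply: F_red].
have [/andP[n_gt0 pn] | ] := boolP ((0 < n)%N && (p %| n)%N); last first.
  move=> n_bad; apply: IH => i ni i_gt0 pi; apply: F_red => //.
  by rewrite ltn_neqAle ni andbT; apply: contraNneq n_bad => ->; rewrite i_gt0.
have [G [FG Gn G_eq]] := AS_equiv_drop_coef F n_gt0 pn.
have [g [Gg g_red]] : exists g, AS_reduced_form p G g.
  apply: IH => i ni i_gt0 pi; have [<-//|n_lt] := eqVneq n i.
  by rewrite G_eq ?F_red // ltn_neqAle n_lt.
by exists g; split=> //; apply: AS_equiv_trans Gg.
Qed.

End Existence.

Section ReducedFormSize.
Variables (L : idomainType) (p : nat).
Hypothesis chL : p \in [pchar L].
Implicit Types F g : {poly L}.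

Let p_pr : prime p := pcharf_prime chL.
Let p_gt1 : (1 < p)%N := prime_gt1 p_pr.

Lemma AS_reduced_form_coef_expp F g j : AS_reduced_form p F g -> ~~ (p %| j)%N ->
  exists M0, forall M, (M0 <= M)%N -> g`_j ^+ (p ^ M) = AS_trace p j F M.
Proof.
move=> [[h Fgh] g_red] pNj; have j_gt0 := ndvdn_gt0 pNj.
exists (size h) => M hM; apply/eqP; rewrite eq_sym -subr_eq0.
rewrite -(AS_trace_reduced chL _ j_gt0 g_red) -AS_traceB // Fgh AS_trace_AS_image //.
by rewrite nth_default ?oppr0 // (leq_trans hM) ?leq_expl_mul.
Qed.

Lemma AS_reduced_form_coef_eq0 F g j : AS_reduced_form p F g -> ~~ (p %| j)%N ->
  (forall m, F`_(p ^ m * j) = 0) -> g`_j = 0.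
Proof.
move=> Fg pNj F_eq0; have [M0 gF] := AS_reduced_form_coef_expp Fg pNj.
by have /eqP := gF M0 (leqnn _); rewrite AS_trace_eq0 // expf_eq0 => /andP[_ /eqP].
Qed.

Lemma size_AS_reduced_form F g : AS_reduced_form p F g -> (size g <= (e_of p F).+1)%N.
Proof.
move=> Fg; apply/leq_sizeP => j e_lt_j.
have [pj | pNj] := boolP (p %| j)%N.
  by case: Fg => _; apply; rewrite ?(leq_trans _ e_lt_j).
apply: (AS_reduced_form_coef_eq0 Fg pNj) => m; apply/eqP; apply: contraTT e_lt_j.
move=> Fm; rewrite -leqNgt -(p'part_expnM m p_pr pNj) e_of_max //.
by rewrite muln_gt0 expn_gt0 ltnW // (ndvdn_gt0 pNj).
Qed.

(* 'X *: F^:P is s *: F as a polynomial in the scalar s (cf. AS_trace_scale). *)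
Definition AS_exceptional_poly F : {poly L} :=
  AS_trace p (e_of p F) ('X *: F^:P) (size F).

Lemma AS_trace_scaleX_neq0 F j m M : (m <= M)%N -> F`_(p ^ m * j) != 0 ->
  AS_trace p j ('X *: F^:P) M != 0.
Proof.
move=> mM Fm.
have coef1_neq0 M' : F`_(p ^ M' * j) != 0 -> AS_trace p j ('X *: F^:P) M' != 0.
  by apply: contraNneq => Q0; rewrite -(coef1_AS_trace_scaleX chL) Q0 coef0.
elim: M mM => [|M IH]; first by rewrite leqn0 => /eqP m0; apply: coef1_neq0; rewrite -m0.
rewrite leq_eqVlt ltnS => /predU1P[m_eq | /IH Q_neq0].
  by apply: coef1_neq0; rewrite -m_eq.
have [FM0 | ] := eqVneq F`_(p ^ M.+1 * j) 0; last exact: coef1_neq0.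
by rewrite /= coefZ coef_map FM0 mulr0 addr0 expf_neq0.
Qed.

Lemma AS_exceptional_poly_neq0 F i :
  (0 < i)%N -> F`_i != 0 -> AS_exceptional_poly F != 0.
Proof.
move=> i_gt0 Fi; have [_ [m m_lt Fm]] := e_of_witness p_pr i_gt0 Fi.
exact: AS_trace_scaleX_neq0 (ltnW m_lt) Fm.
Qed.

Lemma size_AS_reduced_form_scale F i s g : (0 < i)%N -> F`_i != 0 -> s != 0 ->
  ~~ root (AS_exceptional_poly F) s -> AS_reduced_form p (s *: F) g ->
  (size g).-1 = e_of p F.
Proof.
move=> i_gt0 Fi s0 sQ Fg; have [pNe _] := e_of_witness p_pr i_gt0 Fi.
suff g_e : g`_(e_of p F) != 0.
  have := size_AS_reduced_form Fg; rewrite e_of_scale // => size_le.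
  by rewrite (@anti_leq (size g) (e_of p F).+1) ?size_le ?coef_neq0_ltn_size.
have [M0 gF] := AS_reduced_form_coef_expp Fg pNe.
have := gF (size F + M0)%N (leq_addl _ _).
rewrite AS_trace_scale AS_trace_stable => [gQ|m m_gt]; last first.
  rewrite coefZ coef_map nth_default ?mulr0 // (leq_trans (ltnW m_gt)) ?leq_expl_mul //.
  exact: ndvdn_gt0 pNe.
apply: contraNneq sQ => g_e0; move: gQ; rewrite g_e0 horner_exp expr0n expn_eq0.
by rewrite gtn_eqF ?(ltnW p_gt1) // => /esym/eqP; rewrite expf_eq0 => /andP[].
Qed.

End ReducedFormSize.

Theorem mainTheorem1 (k : finFieldType) (p : nat) (f : {poly k})
    (L : closedFieldType) (iota : {rmorphism k -> L}) :
  prime p -> p \in [pchar k] ->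
  integralRange iota ->
  cond_star p f ->
  exists S : seq L,
    forall s : L, s != 0 -> s \notin S ->
      (exists g : {poly L}, AS_reduced_form p (s *: map_poly iota f) g) /\
      (forall g : {poly L}, AS_reduced_form p (s *: map_poly iota f) g ->
         (size g).-1 = e_of p f).
Proof.
(* Condition (star) only serves to provide a nonconstant term of f. *)
move=> p_pr chk _ [i [i_gt0 _ fi]].
have chL := rmorph_pchar iota chk.
set F := map_poly iota f.
have Fi : F`_i != 0 by rewrite coef_map fmorph_eq0.
have e_F : e_of p F = e_of p f.
  by apply: eq_e_of => [|j]; rewrite ?size_map_poly // coef_map fmorph_eq0.
have [S Q_roots] := closed_field_poly_normal (AS_exceptional_poly p F).
exists S => s s0 sS; split.
  by apply: (exists_AS_reduced_form chL) => x; exact: closed_nth_root (prime_gt0 p_pr).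
move=> g Fg; rewrite -e_F (size_AS_reduced_form_scale chL i_gt0 Fi s0 _ Fg) //.
have Q_neq0 := AS_exceptional_poly_neq0 chL i_gt0 Fi.
by rewrite Q_roots rootZ ?lead_coef_eq0 // root_prod_XsubC.
Qed.
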